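(* Let $n\ge1$ and let $S\subseteq\mathbb{Z}_{2^n}$ with $|S|=2^{n-1}+1$. For every integer $a$ with $1\le a\le n$, $$|C(a,a,a+)|\ge\max\{|S_a|(|S_{a+}|-|L_a|+|S_a|),\;|S_{a+}|(2|S_a|-|L_a|),\;0\}.$$
   Context: Layers: for $1\le i\le n$, $L_i=\{x\in\mathbb{Z}_{2^n}: x\equiv 2^{i-1}\pmod{2^i}\}$, $L_{n+1}=\{0\}$. $S_i=S\cap L_i$ and $S_{i+}=S\cap(L_{i+1}\cup\dots\cup L_{n+1})$. $C(a,a,a+)$ is the set of ordered triples $(x,y,z)$ with $x+y=z$ in $\mathbb{Z}_{2^n}$, $x\in S_a$, $y\in S_a$, $z\in S_{a+}$. *)

(* Z_{2^n} is modelled as 'I_(2^n) with addition mod 2^n. *)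
From mathcomp Require Import all_boot all_order all_algebra.
Set Implicit Arguments. Unset Strict Implicit. Unset Printing Implicit Defensive.
Import Order.TTheory GRing.Theory Num.Theory.

Definition addmod (n : nat) (x y : 'I_(2 ^ n)) : nat := (x + y) %% 2 ^ n.

Definition layer (n i : nat) : {set 'I_(2 ^ n)} :=
  [set x : 'I_(2 ^ n) |
     if (1 <= i <= n) then (x %% 2 ^ i == 2 ^ i.-1)
     else (i == n.+1) && (nat_of_ord x == 0)].

Definition Slayer (n : nat) (S : {set 'I_(2 ^ n)}) (i : nat) : {set 'I_(2 ^ n)} :=
  S :&: layer n i.

Definition Splus (n : nat) (S : {set 'I_(2 ^ n)}) (i : nat) : {set 'I_(2 ^ n)} :=
  [set x in S | [exists j : 'I_(n.+2), (i < j) && (x \in layer n j)]].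

Definition Caaap (n : nat) (S : {set 'I_(2 ^ n)}) (a : nat)
  : {set 'I_(2 ^ n) * 'I_(2 ^ n) * 'I_(2 ^ n)} :=
  [set t | [&& t.1.1 \in Slayer S a, t.1.2 \in Slayer S a,
             t.2 \in Splus S a & nat_of_ord t.2 == addmod t.1.1 t.1.2]].

(** Both bounds count sums [x + y = z] fibrewise. The key fact is that [L_a]
    is closed under [x |-> z - x] for [z ∈ S_(a+)], since [z ≡ 0] and
    [x ≡ 2^(a-1)] modulo [2^a] force [z - x ≡ 2^(a-1)]. Hence, for fixed
    [x ∈ S_a], the [|S_(a+)|] elements [y] with [x + y ∈ S_(a+)] lie in [L_a],
    so at least [|S_a| + |S_(a+)| - |L_a|] of them lie in [S_a]; summing over
    [x] gives the first bound. Likewise, for fixed [z ∈ S_(a+)], both [S_a] and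
    [z - S_a] lie in [L_a], so they share at least [2|S_a| - |L_a|] elements;
    summing over [z] gives the second. *)
From mathcomp Require Import all_boot all_order all_algebra.
From mathcomp Require Import zify.
Import Order.TTheory GRing.Theory Num.Theory.
Set Implicit Arguments. Unset Strict Implicit. Unset Printing Implicit Defensive.

Lemma card_pairs_dep (T : finType) (A : {set T}) (F : T -> {set T}) :
  #|[set p : T * T | (p.1 \in A) && (p.2 \in F p.1)]| = \sum_(x in A) #|F x|.
Proof.
rewrite -sum1dep_card.
rewrite -(pair_big_dep (mem A) (fun x => mem (F x)) (fun _ _ => 1)) /=.
by apply: eq_bigr => x _; rewrite sum1_card.
Qed.

Lemma leq_card_setI (T : finType) (A B L : {set T}) :
  A \subset L -> B \subset L -> #|A| + #|B| <= #|A :&: B| + #|L|.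
Proof.
move=> sAL sBL; rewrite -cardsUI addnC leq_add2l subset_leq_card //.
by rewrite subUset sAL.
Qed.

Lemma leq_card_fibers (T U : finType) (A : {set T}) (F : T -> {set T})
    (C : {set U}) (f : T * T -> U) (k l : nat) :
  injective f -> (forall x y, x \in A -> y \in F x -> f (x, y) \in C) ->
  (forall x, x \in A -> k <= #|F x| + l) ->
  #|A| * k <= #|C| + #|A| * l.
Proof.
move=> inj_f fC Fk.
have le_pairs : \sum_(x in A) #|F x| <= #|C|.
  rewrite -card_pairs_dep -(card_imset _ inj_f); apply: subset_leq_card.
  by apply/subsetP => _ /imsetP [[x y] /setIdP [/= xA yF] ->]; apply: fC.
by rewrite -!sum_nat_const (leq_trans (leq_sum _ Fk)) // big_split /= leq_add2r.
Qed.

Lemma modn_double_compl (h x y : nat) :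
  0 < h -> x %% h.*2 = h -> (x + y) %% h.*2 = 0 -> y %% h.*2 = h.
Proof.
move=> h_gt0; rewrite -mul2n; set d := 2 * h => xh xy0.
have hr0 : (h + y %% d) %% d = 0 by rewrite -{1}xh modnDm.
have r_lt : y %% d < d by rewrite ltn_pmod // muln_gt0.
move: hr0 r_lt; set r := y %% d => hr0 r_lt.
have [lt_rh | le_hr] := ltnP r h.
  by move: hr0; rewrite modn_small; lia.
move: hr0; have -> : h + r = d + (r - h) by lia.
rewrite modnDl modn_small; lia.
Qed.

Section Translations.

Variable n : nat.

Lemma pow2_gt0 : 0 < 2 ^ n. Proof. by rewrite expn_gt0. Qed.

Definition ord_add (x y : 'I_(2 ^ n)) : 'I_(2 ^ n) :=
  Ordinal (ltn_pmod (x + y) pow2_gt0).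

Definition ord_sub (z x : 'I_(2 ^ n)) : 'I_(2 ^ n) :=
  Ordinal (ltn_pmod (z + (2 ^ n - x)) pow2_gt0).

Lemma val_ord_add (x y : 'I_(2 ^ n)) : val (ord_add x y) = addmod x y.
Proof. by []. Qed.

Lemma addmodC (x y : 'I_(2 ^ n)) : addmod x y = addmod y x.
Proof. by rewrite /addmod addnC. Qed.

Lemma ord_add_inj (x : 'I_(2 ^ n)) : injective (ord_add x).
Proof.
move=> y y' /(congr1 val) /eqP /=.
by rewrite eqn_modDl !modn_small // => /eqP /val_inj.
Qed.

Lemma addmod_ord_sub (z x : 'I_(2 ^ n)) : addmod x (ord_sub z x) = z.
Proof.
rewrite /addmod /= modnDmr.
have -> : x + (z + (2 ^ n - x)) = z + 2 ^ n by have := ltn_ord x; lia.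
by rewrite modnDr modn_small.
Qed.

Lemma ord_subK (z : 'I_(2 ^ n)) : involutive (ord_sub z).
Proof.
move=> x; apply: (@ord_add_inj (ord_sub z x)); apply: val_inj.
by rewrite !val_ord_add addmod_ord_sub addmodC addmod_ord_sub.
Qed.

End Translations.

Section Layers.

Variables (n a : nat).

Lemma Splus_mod0 (S : {set 'I_(2 ^ n)}) (z : 'I_(2 ^ n)) :
  z \in Splus S a -> z %% 2 ^ a = 0.
Proof.
case/setIdP => _ /existsP [j /andP [lt_aj]].
rewrite inE; case: ifP => [/andP [j_gt0 _] /eqP zj | _ /andP [_ /eqP ->]];
  last exact: mod0n.
rewrite -(modn_dvdm z (dvdn_exp2l 2 (ltnW lt_aj))) zj.
by apply/eqP; rewrite -/(dvdn _ _) dvdn_exp2l // -ltnS prednK.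
Qed.

Hypothesis a_range : 1 <= a <= n.

Lemma in_layer (x : 'I_(2 ^ n)) : (x \in layer n a) = (x %% 2 ^ a == 2 ^ a.-1).
Proof. by rewrite inE a_range. Qed.

Lemma layer_addmod_compl (x y : 'I_(2 ^ n)) :
  x \in layer n a -> addmod x y %% 2 ^ a = 0 -> y \in layer n a.
Proof.
case/andP: a_range => a_gt0 le_an.
have pow_a : 2 ^ a = (2 ^ a.-1).*2 by rewrite -mul2n -expnS prednK.
rewrite !in_layer /addmod modn_dvdm ?dvdn_exp2l // pow_a => /eqP xh xy0.
by apply/eqP; apply: modn_double_compl xh xy0; rewrite expn_gt0.
Qed.

Variable S : {set 'I_(2 ^ n)}.

Let Sa := Slayer S a.
Let Sp := Splus S a.
Let L := layer n a.

Lemma Slayer_sub : Sa \subset L.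
Proof. exact: subsetIr. Qed.

Lemma leq_card_Caaap_summand :
  #|Sa| * (#|Sa| + #|Sp|) <= #|Caaap S a| + #|Sa| * #|L|.
Proof.
apply: (@leq_card_fibers _ _ Sa (fun x => Sa :&: ord_add x @^-1: Sp) _
          (fun p => (p, ord_add p.1 p.2)))
  => [p q [] // | x y xSa | x xSa].
  case/setIP => ySa; rewrite inE => xySp.
  by rewrite inE /= xSa ySa xySp /addmod eqxx.
rewrite -(card_preimset Sp (@ord_add_inj n x)) leq_card_setI ?Slayer_sub //.
apply/subsetP => y; rewrite inE => /Splus_mod0 xy0.
exact: layer_addmod_compl (subsetP Slayer_sub x xSa) xy0.
Qed.

Lemma leq_card_Caaap_sum :
  #|Sp| * (2 * #|Sa|) <= #|Caaap S a| + #|Sp| * #|L|.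
Proof.
apply: (@leq_card_fibers _ _ Sp (fun z => Sa :&: ord_sub z @^-1: Sa) _
          (fun p => (p.2, ord_sub p.1 p.2, p.1)))
  => [[z x] [z' x'] [-> _ ->] // | z x zSp | z zSp].
  case/setIP => xSa; rewrite inE => zxSa.
  by rewrite inE xSa zxSa zSp addmod_ord_sub eqxx.
rewrite mul2n -addnn.
rewrite -{2}(card_preimset Sa (inv_inj (@ord_subK n z))) leq_card_setI ?Slayer_sub //.
apply/subsetP => x; rewrite inE => /(subsetP Slayer_sub) zxL.
by apply: layer_addmod_compl zxL _; rewrite addmodC addmod_ord_sub (Splus_mod0 zSp).
Qed.

End Layers.

Local Open Scope ring_scope.

Theorem claim4p2 (n : nat) (S : {set 'I_(2 ^ n)}) (a : nat) :
  (1 <= n)%N -> #|S| = (2 ^ n.-1).+1 -> (1 <= a <= n)%N ->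
  Num.max (#|Slayer S a|%:Z * (#|Splus S a|%:Z - #|layer n a|%:Z + #|Slayer S a|%:Z))
    (Num.max (#|Splus S a|%:Z * (2 * #|Slayer S a|%:Z - #|layer n a|%:Z)) 0)
  <= #|Caaap S a|%:Z.
Proof.
move=> _ _ a_range.
have := leq_card_Caaap_summand a_range S; have := leq_card_Caaap_sum a_range S.
rewrite ge_max ge_max /=.
set sa := #|Slayer S a|; set sp := #|Splus S a|; set l := #|layer n a|.
set c := #|Caaap S a| => by_sum by_summand.
by apply/and3P; split; [nia | nia | ].
Qed.
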